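(* Let $n\ge1$, let $f_1,\dots,f_n:\mathbb{R}^d\to\mathbb{R}$ be $L$-smooth (i.e. $\|\nabla f_i(x)-\nabla f_i(y)\|\le L\|x-y\|$ for all $x,y$), and $f=\frac1n\sum_i f_i$. Let $x_0,x_1,\dots,x_T$ and $\nabla_0,\dots,\nabla_{T-1}$ be the iterates and gradient estimators produced by AdaSpider (described in the context) with input $x_0$, $\beta_0>0$, $G_0>0$. Then there is an absolute constant $C>0$ such that, for every realization of the random choices, \[ \sum_{t=0}^{T-1}\|\nabla_t\|^2\le C\, n^2T^3\Big(\frac{L^2}{\beta_0^2}+\|\nabla f(x_0)\|^2\Big). \]
   Context: $\|\cdot\|$ is the Euclidean norm. AdaSpider: input $x_0\in\mathbb{R}^d$, $\beta_0>0$, $G_0>0$, horizon $T\ge1$. For $t=0,1,\dots,T-1$: if $t \bmod n=0$, set $\nabla_t:=\nabla f(x_t)$; otherwise pick $i_t\in\{1,\dots,n\}$ uniformly at random (independently of the past) and set $\nabla_t:=\nabla f_{i_t}(x_t)-\nabla f_{i_t}(x_{t-1})+\nabla_{t-1}$. Then set $\gamma_t:=1\big/\big(n^{1/4}\beta_0\sqrt{n^{1/2}G_0^2+\sum_{s=0}^t\|\nabla_s\|^2}\big)$ and $x_{t+1}:=x_t-\gamma_t\nabla_t$. *)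

From HB Require Import structures.
From mathcomp Require Import all_boot all_order all_algebra.
From mathcomp Require Import all_classical all_reals all_analysis.
Set Implicit Arguments. Unset Strict Implicit. Unset Printing Implicit Defensive.
Import Order.TTheory GRing.Theory Num.Theory.
Import numFieldNormedType.Exports.
Local Open Scope ring_scope.

Section AdaSpider.
Variable R : realType.

Definition dotv (d : nat) (u v : 'rV[R]_d) : R := \sum_(j < d) u 0 j * v 0 j.
Definition enorm (d : nat) (v : 'rV[R]_d) : R := Num.sqrt (dotv v v).

Definition is_gradient (d : nat) (f : 'rV[R]_d -> R) (g : 'rV[R]_d -> 'rV[R]_d) :=
  forall x, differentiable f x /\ forall h, 'd f x h = dotv (g x) h.

Definition lipschitz_grad (d : nat) (g : 'rV[R]_d -> 'rV[R]_d) (L : R) :=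
  forall x y, enorm (g x - g y) <= L * enorm (x - y).

Definition fullgrad (n d : nat) (g : 'I_n -> 'rV[R]_d -> 'rV[R]_d) (x : 'rV[R]_d)
  : 'rV[R]_d := n%:R^-1 *: \sum_(i < n) g i x.

Definition ada_gamma (n : nat) (beta0 G0 S : R) : R :=
  (Num.sqrt (Num.sqrt n%:R) * beta0 *
   Num.sqrt (Num.sqrt n%:R * G0 ^+ 2 + S))^-1.

(* State at time t : (x_t, nabla_t, S_t) with S_t = sum_{s<=t} ||nabla_s||^2.
   idx t is the (arbitrary realization of the) random index i_t. *)
Fixpoint ada_state (n d : nat) (g : 'I_n -> 'rV[R]_d -> 'rV[R]_d)
  (idx : nat -> 'I_n) (x0 : 'rV[R]_d) (beta0 G0 : R) (t : nat)
  : 'rV[R]_d * 'rV[R]_d * R :=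
  match t with
  | 0 => let nab := fullgrad g x0 in (x0, nab, enorm nab ^+ 2)
  | t'.+1 =>
      let: (x, nab, Ssum) := ada_state g idx x0 beta0 G0 t' in
      let x' := x - ada_gamma n beta0 G0 Ssum *: nab in
      let nab' := if (t'.+1 %% n == 0)%N then fullgrad g x'
                  else g (idx t'.+1) x' - g (idx t'.+1) x + nab in
      (x', nab', Ssum + enorm nab' ^+ 2)
  end.

Definition ada_x n d g idx x0 beta0 G0 t : 'rV[R]_d :=
  (@ada_state n d g idx x0 beta0 G0 t).1.1.
Definition ada_grad n d g idx x0 beta0 G0 t : 'rV[R]_d :=
  (@ada_state n d g idx x0 beta0 G0 t).1.2.

End AdaSpider.

(** The step size makes every move short: since [||nabla_t||^2 <= S_t], we get
    [||x_(t+1) - x_t|| = gamma_t ||nabla_t|| <= 1 / beta0], hence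
    [||x_t - x_0|| <= t / beta0].  By [L]-smoothness, both a restart
    [grad f (x_t)] and a SPIDER correction [grad f_i (x_t) - grad f_i (x_(t-1))]
    then keep [||nabla_t|| <= ||grad f (x_0)|| + t L / beta0]; squaring and
    summing over [t < T] gives the bound with [C = 2], without the factor [n^2]. *)

From HB Require Import structures.
From mathcomp Require Import all_boot all_order all_algebra.
From mathcomp Require Import all_classical all_reals all_analysis.
From mathcomp Require Import ring lra.
Set Implicit Arguments. Unset Strict Implicit. Unset Printing Implicit Defensive.
Import Order.TTheory GRing.Theory Num.Theory.
Import numFieldNormedType.Exports.
Local Open Scope ring_scope.

Section EuclideanNorm.
Variables (R : realType) (d : nat).
Implicit Types u v w : 'rV[R]_d.

Lemma dotv_ge0 v : 0 <= dotv v v.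
Proof. by apply: sumr_ge0 => j _; rewrite -expr2 sqr_ge0. Qed.

Lemma enorm_ge0 v : 0 <= enorm v.
Proof. exact: sqrtr_ge0. Qed.

Lemma sqr_enorm v : enorm v ^+ 2 = dotv v v.
Proof. by rewrite sqr_sqrtr // dotv_ge0. Qed.

Lemma enormZ (c : R) v : enorm (c *: v) = `|c| * enorm v.
Proof.
rewrite /enorm; have -> : dotv (c *: v) (c *: v) = c ^+ 2 * dotv v v.
  by rewrite /dotv mulr_sumr; apply: eq_bigr => j _; rewrite !mxE; ring.
by rewrite sqrtrM ?sqr_ge0 // sqrtr_sqr.
Qed.

Lemma enormN v : enorm (- v) = enorm v.
Proof. by rewrite -scaleN1r enormZ normrN normr1 mul1r. Qed.

Lemma enorm0 : enorm (0 : 'rV[R]_d) = 0.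
Proof. by rewrite -(scale0r 0) enormZ normr0 mul0r. Qed.

(* Lagrange's identity: twice the Cauchy-Schwarz defect is the sum of the
   squares [(u_i v_j - u_j v_i)^2]. *)
Lemma dotv_CauchySchwarz u v : dotv u v ^+ 2 <= dotv u u * dotv v v.
Proof.
pose a i := u 0 i; pose b i := v 0 i.
have uuvv : dotv u u * dotv v v = \sum_(i < d) \sum_(j < d) (a i * a i) * (b j * b j).
  by rewrite /dotv big_distrlr.
have vvuu : dotv u u * dotv v v = \sum_(i < d) \sum_(j < d) (a j * a j) * (b i * b i).
  rewrite mulrC /dotv big_distrlr; apply: eq_bigr => i _; apply: eq_bigr => j _.
  exact: mulrC.
have uvuv : dotv u v ^+ 2 = \sum_(i < d) \sum_(j < d) (a i * b i) * (a j * b j).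
  by rewrite expr2 /dotv big_distrlr.
have lagrange : \sum_(i < d) \sum_(j < d) (a i * b j - a j * b i) ^+ 2
    = dotv u u * dotv v v + dotv u u * dotv v v - 2 * dotv u v ^+ 2.
  rewrite {1}uuvv vvuu uvuv mulr_sumr -big_split -sumrB /=.
  apply: eq_bigr => i _; rewrite mulr_sumr -big_split -sumrB /=.
  by apply: eq_bigr => j _; ring.
have : 0 <= \sum_(i < d) \sum_(j < d) (a i * b j - a j * b i) ^+ 2.
  by apply: sumr_ge0 => i _; apply: sumr_ge0 => j _; exact: sqr_ge0.
rewrite lagrange; lra.
Qed.

Lemma enormD u v : enorm (u + v) <= enorm u + enorm v.
Proof.
have dotvDD : dotv (u + v) (u + v) = dotv u u + dotv v v + 2 * dotv u v.
  by rewrite /dotv mulr_sumr -!big_split /=; apply: eq_bigr => j _; rewrite !mxE; ring.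
have dotv_le : dotv u v <= enorm u * enorm v.
  apply: le_trans (ler_norm _) _.
  by rewrite -sqrtrM ?dotv_ge0 // -sqrtr_sqr ler_wsqrtr ?dotv_CauchySchwarz.
rewrite -(ger0_norm (addr_ge0 (enorm_ge0 u) (enorm_ge0 v))) -sqrtr_sqr.
by rewrite ler_wsqrtr // dotvDD sqrrD !sqr_enorm; lra.
Qed.

Lemma enorm_triangle u v w : enorm (u - w) <= enorm (u - v) + enorm (v - w).
Proof. by rewrite -[u - w](subrKA v) enormD. Qed.

Lemma enorm_sum n (F : 'I_n -> 'rV[R]_d) :
  enorm (\sum_(i < n) F i) <= \sum_(i < n) enorm (F i).
Proof.
elim/big_ind2: _ => [|x1 x2 y1 y2 le1 le2|//]; first by rewrite enorm0.
exact: le_trans (enormD _ _) (lerD le1 le2).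
Qed.

End EuclideanNorm.

Section Smoothness.
Variables (R : realType) (d : nat).

Lemma lipschitz_grad_normr (g : 'rV[R]_d -> 'rV[R]_d) (L : R) :
  lipschitz_grad g L -> lipschitz_grad g `|L|.
Proof.
move=> lipg x y; apply: le_trans (lipg x y) _.
exact/ler_wpM2r/ler_norm/enorm_ge0.
Qed.

Lemma lipschitz_grad_fullgrad n (g : 'I_n -> 'rV[R]_d -> 'rV[R]_d) (L : R) :
  (0 < n)%N -> (forall i, lipschitz_grad (g i) L) -> lipschitz_grad (fullgrad g) L.
Proof.
move=> n_gt0 lipg x y; have n_pos : 0 < n%:R :> R by rewrite ltr0n.
rewrite /fullgrad -scalerBr -sumrB enormZ ger0_norm; last by rewrite invr_ge0 ltW.
rewrite ler_pdivrMl //.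
have -> : n%:R * (L * enorm (x - y)) = \sum_(i < n) L * enorm (x - y).
  by rewrite sumr_const card_ord mulr_natl.
exact: le_trans (enorm_sum _) (ler_sum _ (fun i _ => lipg i x y)).
Qed.

End Smoothness.

Lemma ada_gamma_step_le (R : realType) d n (beta0 G0 S : R) (v : 'rV[R]_d) :
  (0 < n)%N -> 0 < beta0 -> 0 < G0 -> enorm v ^+ 2 <= S ->
  enorm (ada_gamma n beta0 G0 S *: v) <= beta0^-1.
Proof.
move=> n_gt0 beta0_gt0 G0_gt0 le_vS.
set k := Num.sqrt (Num.sqrt (n%:R : R)).
set s := Num.sqrt (Num.sqrt (n%:R : R) * G0 ^+ 2 + S).
have k_ge1 : 1 <= k by rewrite -{1}sqrtr1 ler_wsqrtr // -{1}sqrtr1 ler_wsqrtr // ler1n.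
have s_gt0 : 0 < s.
  rewrite sqrtr_gt0 ltr_wpDr ?mulr_gt0 ?exprn_gt0 ?sqrtr_gt0 ?ltr0n //.
  exact: le_trans (sqr_ge0 _) le_vS.
have le_vs : enorm v <= s.
  rewrite -(ger0_norm (enorm_ge0 v)) -sqrtr_sqr ler_wsqrtr // ler_wpDl //.
  by rewrite mulr_ge0 ?sqrtr_ge0 ?sqr_ge0.
have kbeta_gt0 : 0 < k * beta0 by rewrite mulr_gt0 // (lt_le_trans ltr01).
have gamma_ge0 : 0 <= ada_gamma n beta0 G0 S.
  by rewrite /ada_gamma -/k -/s invr_ge0 mulr_ge0 // ltW.
rewrite enormZ ger0_norm //; apply: le_trans (ler_wpM2l gamma_ge0 le_vs) _.
rewrite /ada_gamma -/k -/s invfM mulfVK ?gt_eqF // lef_pV2 ?posrE //.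
by rewrite ler_peMl // ltW.
Qed.

Section AdaSpiderBounds.
Variables (R : realType) (n d : nat) (L : R) (g : 'I_n -> 'rV[R]_d -> 'rV[R]_d).
Variables (idx : nat -> 'I_n) (x0 : 'rV[R]_d) (beta0 G0 : R).
Hypotheses (n_gt0 : (0 < n)%N) (beta0_gt0 : 0 < beta0) (G0_gt0 : 0 < G0).
Hypotheses (L_ge0 : 0 <= L) (lipg : forall i, lipschitz_grad (g i) L).

Local Notation x := (ada_x g idx x0 beta0 G0).
Local Notation nab := (ada_grad g idx x0 beta0 G0).
Local Notation sqsum t := (ada_state g idx x0 beta0 G0 t).2.

Lemma ada_xS t : x t.+1 = x t - ada_gamma n beta0 G0 (sqsum t) *: nab t.
Proof. by rewrite /ada_x /ada_grad /=; case: ada_state => [[]]. Qed.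

Lemma ada_gradS t :
  nab t.+1 = if (t.+1 %% n == 0)%N then fullgrad g (x t.+1)
             else g (idx t.+1) (x t.+1) - g (idx t.+1) (x t) + nab t.
Proof. by rewrite /ada_x /ada_grad /=; case: ada_state => [[]]. Qed.

Lemma ada_sqsumS t : sqsum t.+1 = sqsum t + enorm (nab t.+1) ^+ 2.
Proof. by rewrite /ada_grad /=; case: ada_state => [[]]. Qed.

Lemma ada_sqr_grad_le_sqsum t : enorm (nab t) ^+ 2 <= sqsum t.
Proof.
elim: t => [|t IH] //; rewrite ada_sqsumS ler_wpDl //.
exact: le_trans (sqr_ge0 _) IH.
Qed.

Lemma ada_step_le t : enorm (x t.+1 - x t) <= beta0^-1.
Proof.
rewrite ada_xS addrC addKr enormN ada_gamma_step_le //.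
exact: ada_sqr_grad_le_sqsum.
Qed.

Lemma ada_dist_le t : enorm (x t - x0) <= t%:R / beta0.
Proof.
elim: t => [|t IH]; first by rewrite /ada_x /= subrr enorm0 mul0r.
apply: le_trans (enorm_triangle _ (x t) _) _.
by rewrite -natr1 mulrDl mul1r addrC lerD ?ada_step_le.
Qed.

Lemma ada_grad_le t : enorm (nab t) <= enorm (fullgrad g x0) + t%:R * (L / beta0).
Proof.
elim: t => [|t IH]; first by rewrite mul0r addr0.
rewrite ada_gradS; case: ifP => _.
  have := enorm_triangle (fullgrad g (x t.+1)) (fullgrad g x0) 0.
  rewrite !subr0 addrC => /le_trans; apply; rewrite lerD2l mulrCA.
  apply: le_trans (lipschitz_grad_fullgrad n_gt0 lipg _ _) _.
  by apply: ler_wpM2l => //; exact: ada_dist_le.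
have step_le : enorm (g (idx t.+1) (x t.+1) - g (idx t.+1) (x t)) <= L / beta0.
  by apply: le_trans (lipg _ _ _) _; apply: ler_wpM2l => //; exact: ada_step_le.
apply: le_trans (enormD _ _) _; have := lerD step_le IH.
by rewrite -natr1 mulrDl mul1r; lra.
Qed.

End AdaSpiderBounds.

Theorem lemma2 (R : realType) :
  exists C : R, 0 < C /\
  forall (n d T : nat) (L : R) (f : 'I_n -> 'rV[R]_d -> R)
         (g : 'I_n -> 'rV[R]_d -> 'rV[R]_d)
         (idx : nat -> 'I_n) (x0 : 'rV[R]_d) (beta0 G0 : R),
    (1 <= n)%N -> (1 <= T)%N -> 0 < beta0 -> 0 < G0 ->
    (forall i, is_gradient (f i) (g i)) ->
    (forall i, lipschitz_grad (g i) L) ->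
    \sum_(t < T) enorm (ada_grad g idx x0 beta0 G0 t) ^+ 2
      <= C * (n ^ 2)%:R * (T ^ 3)%:R *
         (L ^+ 2 / beta0 ^+ 2 + enorm (fullgrad g x0) ^+ 2).
Proof.
exists 2; split => // n d T L f g idx x0 beta0 G0 n_gt0 T_gt0 beta0_gt0 G0_gt0 _ lipg.
set a := enorm (fullgrad g x0); set b := `|L| / beta0.
have a_ge0 : 0 <= a := enorm_ge0 _.
have b_ge0 : 0 <= b := divr_ge0 (normr_ge0 L) (ltW beta0_gt0).
have T_ge1 : 1 <= T%:R :> R by rewrite ler1n.
have grad_le t : (t < T)%N -> enorm (ada_grad g idx x0 beta0 G0 t) <= T%:R * (a + b).
  move=> lt_tT; have t_le : t%:R <= T%:R :> R by rewrite ler_nat ltnW.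
  have := ada_grad_le idx x0 n_gt0 beta0_gt0 G0_gt0 (normr_ge0 L)
    (fun i => lipschitz_grad_normr (lipg i)) t.
  rewrite -/a -/b => /le_trans; apply.
  have : t%:R * b <= T%:R * b by exact: ler_wpM2r.
  have : a <= T%:R * a by rewrite ler_peMl.
  lra.
have sum_le : \sum_(t < T) enorm (ada_grad g idx x0 beta0 G0 t) ^+ 2
    <= T%:R ^+ 3 * (a + b) ^+ 2.
  apply: le_trans (ler_sum _ (fun (t : 'I_T) _ => _ : _ <= (T%:R * (a + b)) ^+ 2)) _.
    by move=> t _; rewrite ler_sqr ?nnegrE ?enorm_ge0 ?grad_le ?mulr_ge0 ?addr_ge0.
  by rewrite sumr_const card_ord -[X in X <= _]mulr_natl; lra.
have -> : L ^+ 2 / beta0 ^+ 2 = b ^+ 2 by rewrite /b exprMn real_normK ?num_real ?exprVn.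
apply: le_trans sum_le _; rewrite !natrX.
have sqr_ab_le : (a + b) ^+ 2 <= 2 * (b ^+ 2 + a ^+ 2) by have := sqr_ge0 (a - b); lra.
have T3_ge0 : 0 <= T%:R ^+ 3 :> R by rewrite exprn_ge0.
have n2_ge1 : 1 <= n%:R ^+ 2 :> R by rewrite expr_ge1 ?ler1n.
have sum_sqr_ge0 : 0 <= T%:R ^+ 3 * (2 * (b ^+ 2 + a ^+ 2)).
  exact: le_trans (mulr_ge0 T3_ge0 (sqr_ge0 _)) (ler_wpM2l T3_ge0 sqr_ab_le).
have := ler_wpM2l T3_ge0 sqr_ab_le; have := ler_wpM2r sum_sqr_ge0 n2_ge1.
lra.
Qed.
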